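(* Fix $X\in\mathcal{E}$ and let $I$ be the Daniell integral associated with $X$. Let $f\in\mathbb{L}$ have bounded support. Then there exists an open dense set $H\subseteq K$ such that $I(f)(\omega)=f(X(\omega))$ for every $\omega\in H$.
   Context: Let $\mathcal{E}$ be an order complete vector lattice with a weak order unit $E$, $K$ its Stone space (extremally disconnected compact Hausdorff), and $C^\infty(K)$ the vector lattice of continuous functions $K\to[-\infty,\infty]$ finite off a nowhere dense set (identified when equal off a nowhere dense set), which is the universal completion $\mathcal{E}^u$. Fix a Maeda–Ogasawara representation of $\mathcal{E}$ as an order dense ideal of $C^\infty(K)$ with $E$ corresponding to $\mathbf{1}$. For $Y\in\mathcal{E}$, $P_Y$ denotes the band projection onto the band generated by $Y$; in this representation $P_YE=\mathbf{1}_{\overline{\{Y\neq0\}}}$. Daniell calculus: $F(\mathbb{R})$ is the algebra of finite disjoint unions of intervals $(a,b]$, $(a,\infty)$, $(-\infty,b]$ ($a,b\in\mathbb{R}$), and $\mathbb{L}$ is the vector lattice of functions $f=\sum_{i=1}^n a_i\mathbf{1}_{S_i}$ with $a_i\in\mathbb{R}$ and $(S_i)$ a partition of $\mathbb{R}$ into sets of $F(\mathbb{R})$. For fixed $X\in\mathcal{E}$ the spectral system is $A_t=E-P_{(X-tE)^+}E$ ($t\in\mathbb{R}$), with $A_\infty=\sup_tA_t$, $A_{-\infty}=\inf_tA_t$; the measure $\mu_A$ is $\mu_A(a,b]=A_b-A_a$, $\mu_A(a,\infty)=A_\infty-A_a$, $\mu_A(-\infty,b]=A_b-A_{-\infty}$,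 extended additively to finite disjoint unions; and the Daniell integral associated with $X$ is $I(f)=\sum_i a_i\mu_A(S_i)$ for $f=\sum_ia_i\mathbf{1}_{S_i}\in\mathbb{L}$. *)

From HB Require Import structures.
From mathcomp Require Import all_boot all_order all_algebra.
From mathcomp Require Import all_classical all_reals all_analysis.
Import numFieldNormedType.Exports.
Set Implicit Arguments. Unset Strict Implicit. Unset Printing Implicit Defensive.
Import Order.TTheory GRing.Theory Num.Theory.
Local Open Scope classical_set_scope.
Local Open Scope ring_scope.

Definition nowhere_dense (T : topologicalType) (N : set T) : Prop :=
  interior (closure N) = set0.

Definition extremally_disconnected (T : topologicalType) : Prop :=
  forall U : set T, open U -> open (closure U).

(* X is an element of C^oo(K): continuous K -> [-oo,+oo], finite off a
   nowhere dense set.  (Two such continuous functions that agree off a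
   nowhere dense set agree everywhere, so no quotient is needed.) *)
Definition in_Cinf (R : realType) (K : topologicalType) (X : K -> \bar R) : Prop :=
  continuous X /\ nowhere_dense [set w | ~ (X w \is a fin_num)].

(* P_Y E = 1_{closure {Y <> 0}} in the Maeda--Ogasawara representation *)
Definition bandprojE (R : realType) (K : topologicalType) (Y : K -> \bar R) : K -> R :=
  \1_(closure [set w | Y w != 0%E]).

Definition posdiff (R : realType) (K : topologicalType) (X : K -> \bar R) (t : R)
  : K -> \bar R := fun w => maxe (X w - t%:E)%E 0%E.

(* A_t = E - P_{(X - tE)^+} E  (E corresponds to the constant function 1) *)
Definition spectral (R : realType) (K : topologicalType) (X : K -> \bar R) (t : R)
  : K -> R := fun w => 1 - bandprojE (posdiff X t) w.

Definition is_sup_fam (R : realType) (K : topologicalType) (A : R -> K -> R)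
  (s : K -> R) : Prop :=
  continuous s /\ (forall t w, A t w <= s w) /\
  (forall g : K -> R, continuous g -> (forall t w, A t w <= g w) ->
     forall w, s w <= g w).

Definition is_inf_fam (R : realType) (K : topologicalType) (A : R -> K -> R)
  (s : K -> R) : Prop :=
  continuous s /\ (forall t w, s w <= A t w) /\
  (forall g : K -> R, continuous g -> (forall t w, g w <= A t w) ->
     forall w, g w <= s w).

Inductive ivl (R : realType) : Type :=
  | IOC of R & R
  | IOinf of R
  | IinfC of R.

Definition ivl_set (R : realType) (J : ivl R) : set R :=
  match J with
  | IOC a b => [set x | a < x <= b]
  | IOinf a => [set x | a < x]
  | IinfC b => [set x | x <= b]
  end.

Definition ivl_wf (R : realType) (J : ivl R) : Prop :=
  match J with IOC a b => a < b | _ => True end.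

(* a set of F(R), given as a finite list of pairwise disjoint basic intervals *)
Definition FR_wf (R : realType) (s : seq (ivl R)) : Prop :=
  (forall i, (i < size s)%N -> ivl_wf (nth (IinfC 0) s i)) /\
  (forall i j, (i < size s)%N -> (j < size s)%N -> i != j ->
     ivl_set (nth (IinfC 0) s i) `&` ivl_set (nth (IinfC 0) s j) = set0).

Definition FR_set (R : realType) (s : seq (ivl R)) : set R :=
  \bigcup_(i in [set i | (i < size s)%N]) ivl_set (nth (IinfC 0) s i).

Definition mu_ivl (R : realType) (K : Type) (A : R -> K -> R) (Ainf Aminf : K -> R)
  (J : ivl R) : K -> R :=
  match J with
  | IOC a b => fun w => A b w - A a w
  | IOinf a => fun w => Ainf w - A a w
  | IinfC b => fun w => A b w - Aminf w
  end.

Definition mu_FR (R : realType) (K : Type) (A : R -> K -> R) (Ainf Aminf : K -> R)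
  (s : seq (ivl R)) : K -> R :=
  fun w => \sum_(J <- s) mu_ivl A Ainf Aminf J w.

(* an element f = sum_i a_i 1_{S_i} of L, (S_i) a partition of R in F(R) *)
Definition L_wf (R : realType) (n : nat) (S : 'I_n -> seq (ivl R)) : Prop :=
  (forall i, FR_wf (S i)) /\
  (forall x : R, exists i, FR_set (S i) x) /\
  (forall i j, i != j -> FR_set (S i) `&` FR_set (S j) = set0).

Definition L_fun (R : realType) (n : nat) (a : 'I_n -> R) (S : 'I_n -> seq (ivl R))
  : R -> R := fun x => \sum_(i < n) a i * \1_(FR_set (S i)) x.

Definition daniell (R : realType) (K : Type) (A : R -> K -> R) (Ainf Aminf : K -> R)
  (n : nat) (a : 'I_n -> R) (S : 'I_n -> seq (ivl R)) : K -> R :=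
  fun w => \sum_(i < n) a i * mu_FR A Ainf Aminf (S i) w.

Definition bounded_support (R : realType) (f : R -> R) : Prop :=
  exists M : R, forall x, M < `|x| -> f x = 0.

From HB Require Import structures.
From mathcomp Require Import all_boot all_order all_algebra.
From mathcomp Require Import all_classical all_reals all_analysis.
From mathcomp Require Import lra.
Set Implicit Arguments. Unset Strict Implicit. Unset Printing Implicit Defensive.
Import Order.TTheory GRing.Theory Num.Theory.
Import numFieldNormedType.Exports.
Local Open Scope classical_set_scope.
Local Open Scope ring_scope.

(* Off the boundary of an open set A, the indicator of closure A (the band
   projection of the paper) coincides with the indicator of A, and the
   complement of a boundary is open and dense.  For A = {X > t} this gives
   A_t(w) = [X(w) <= t].  Bounded support forces every interval carrying a
   nonzero coefficient of f to be of the form (u, v], so only finitely many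
   t are involved; on the intersection H of the corresponding open dense sets
   (and of the open dense set where X is finite) the sum defining I(f)(w)
   collapses to the sum of the a_i 1_{S_i}(X(w)), which is f(X(w)). *)

Section off_boundary.
Variable T : topologicalType.

Definition off_boundary (A : set T) : set T := ~` closure A `|` A.

Lemma open_off_boundary A : open A -> open (off_boundary A).
Proof. by move=> oA; apply: openU => //; rewrite openC; exact: closed_closure. Qed.

Lemma dense_off_boundary A : dense (off_boundary A).
Proof.
move=> O [p Op] oO.
have [[q [Oq Aq]]|nOA] := pselect (O `&` A !=set0).
  by exists q; split => //; right.
exists p; split => //; left => clAp; apply: nOA.
have [q [Aq Oq]] := clAp O (open_nbhs_nbhs (conj oO Op)).
by exists q.
Qed.

Lemma indic_closure_off_boundary (R : numDomainType) A w :
  off_boundary A w -> \1_(closure A) w = \1_A w :> R.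
Proof.
rewrite !indicE; case=> [nclAw|Aw].
  by rewrite !memNset // => Aw; apply: nclAw; exact: subset_closure.
by rewrite !mem_set //; exact: subset_closure.
Qed.

Lemma dense_setC_nowhere_dense (N : set T) : nowhere_dense N -> dense (~` N).
Proof.
move=> ndN O [p Op] oO; apply/set0P/negP => /eqP ON0.
have ON : O `<=` N.
  by move=> w Ow; apply: contrapT => Nw; have : (O `&` ~` N) w by []; rewrite ON0.
have : O `<=` interior (closure N).
  by rewrite -open_subsetE //; exact: subset_trans ON (@subset_closure _ N).
by rewrite ndN => /(_ p Op).
Qed.

Lemma open_dense_seq_cap (I : eqType) (D : set T) (F : I -> set T) (l : seq I) :
  open D -> dense D -> (forall i, open (F i) /\ dense (F i)) ->
  open [set w | D w /\ forall i, i \in l -> F i w] /\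
  dense [set w | D w /\ forall i, i \in l -> F i w].
Proof.
move=> oD dD oF; elim: l => [|i l [oH dH]].
  suff -> : [set w | D w /\ forall i, i \in [::] -> F i w] = D by [].
  by apply/seteqP; split => w /= => [[]|Dw].
have -> : [set w | D w /\ forall j, j \in i :: l -> F j w] =
    F i `&` [set w | D w /\ forall j, j \in l -> F j w].
  apply/seteqP; split => w /= [].
    move=> Dw Fw; split; first exact/Fw/mem_head.
    by split=> // j jl; apply: Fw; rewrite inE jl orbT.
  by move=> Fiw [Dw Fw]; split => // j; rewrite inE => /orP[/eqP -> //|]; exact: Fw.
have [oFi dFi] := oF i.
by split; [exact: openI | exact: denseI].
Qed.

End off_boundary.

Section spectral_system.
Variables (R : realType) (K : topologicalType) (X : K -> \bar R).

Lemma open_dense_fin_num : in_Cinf X ->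
  open [set w | X w \is a fin_num] /\ dense [set w | X w \is a fin_num].
Proof.
move=> [cX ndX]; split.
  have -> : [set w | X w \is a fin_num] =
      X @^-1` ([set y | (-oo < y)%E] `&` [set y | (y < +oo)%E]).
    by apply/seteqP; split => w /=; rewrite fin_numElt => /andP.
  move/continuousP : cX; apply; apply: openI;
    [exact: open_ereal_gt_ereal | exact: open_ereal_lt_ereal].
have := dense_setC_nowhere_dense ndX.
by congr dense; apply/seteqP; split => w /= => [/contrapT|fw].
Qed.

Lemma open_Cinf_gt t : in_Cinf X -> open [set w | (t%:E < X w)%E].
Proof. by move=> [/continuousP cX _]; exact: cX _ (open_ereal_gt_ereal (x := t%:E)). Qed.

Lemma posdiff_neq0 t w : (posdiff X t w != 0)%E = (t%:E < X w)%E.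
Proof.
rewrite /posdiff maxEle; case: (X w) => [r| |] /=.
- rewrite lte_fin -EFinD lee_fin subr_le0; case: (leP r t) => [|rt].
    by rewrite eqxx.
  by rewrite eqe subr_eq0 gt_eqF.
- by rewrite ltry.
- by rewrite addNye leNye eqxx ltNge leNye.
Qed.

Lemma spectral_off_boundary t w :
  off_boundary [set w | (t%:E < X w)%E] w -> spectral X t w = (X w <= t%:E)%E%:R.
Proof.
rewrite /spectral /bandprojE.
have -> : [set w | posdiff X t w != 0%E] = [set w | (t%:E < X w)%E].
  by apply/seteqP; split => v /=; rewrite posdiff_neq0.
move=> /indic_closure_off_boundary ->.
rewrite indicE leNgt; case: (boolP (t%:E < X w)%E) => h.
  by rewrite mem_set // subrr.
by rewrite memNset ?subr0 //; exact/negP.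
Qed.

Lemma mu_IOC_off_boundary (Ainf Aminf : K -> R) u v w :
  u <= v -> X w \is a fin_num ->
  off_boundary [set w | (u%:E < X w)%E] w ->
  off_boundary [set w | (v%:E < X w)%E] w ->
  mu_ivl (spectral X) Ainf Aminf (IOC u v) w = \1_(ivl_set (IOC u v)) (fine (X w)).
Proof.
move=> uv /fineK Xw Bu Bv /=; rewrite !spectral_off_boundary // -Xw !lee_fin indicE.
set x := fine (X w).
have -> : (x \in [set x | u < x <= v]) = (u < x <= v).
  by apply/idP/idP => [/set_mem //|h]; exact/mem_set.
by case: (leP x u) => [xu|]; [rewrite (le_trans xu uv) subrr|rewrite subr0].
Qed.

End spectral_system.

Section Daniell_calculus.
Variable R : realType.

Definition endpoints (J : ivl R) : seq R :=
  match J with IOC a b => [:: a; b] | IOinf a => [:: a] | IinfC b => [:: b] end.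

Definition breakpoints (n : nat) (S : 'I_n -> seq (ivl R)) : seq R :=
  flatten [seq flatten [seq endpoints J | J <- S i] | i <- enum 'I_n].

Lemma mem_breakpoints n (S : 'I_n -> seq (ivl R)) i k t :
  (k < size (S i))%N -> t \in endpoints (nth (IinfC 0) (S i) k) -> t \in breakpoints S.
Proof.
move=> ks tJ; apply/flattenP; exists (flatten [seq endpoints J | J <- S i]).
  by apply: map_f; rewrite mem_enum.
apply/flattenP; exists (nth [::] [seq endpoints J | J <- S i] k).
  by apply: mem_nth; rewrite size_map.
by rewrite (nth_map (IinfC 0)).
Qed.

Lemma sum_indic_FR_set (s : seq (ivl R)) x :
  FR_wf s -> \sum_(J <- s) \1_(ivl_set J) x = \1_(FR_set s) x :> R.
Proof.
move=> [_ disj]; rewrite (big_nth (IinfC 0)) big_mkord.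
have [[k /= ks xk]|nx] := pselect (FR_set s x).
  rewrite (bigD1 (Ordinal ks)) //= big1 => [|j jk].
    by rewrite addr0 !indicE (mem_set xk) mem_set //; exists k.
  rewrite indicE memNset // => xj.
  have : (ivl_set (nth (IinfC 0) s k) `&` ivl_set (nth (IinfC 0) s j)) x by [].
  by rewrite disj // eq_sym; apply: contra jk => /eqP jk; apply/eqP/val_inj.
rewrite big1 => [|j _]; first by rewrite indicE memNset.
by rewrite indicE memNset //= => xj; apply: nx; exists (nat_of_ord j) => /=.
Qed.

Lemma L_funE n (a : 'I_n -> R) (S : 'I_n -> seq (ivl R)) i x :
  L_wf S -> FR_set (S i) x -> L_fun a S x = a i.
Proof.
move=> [_ [_ disj]] xi; rewrite /L_fun (bigD1 i) //= big1 => [|j ji].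
  by rewrite indicE mem_set // mulr1 addr0.
rewrite indicE memNset ?mulr0 // => xj.
have : (FR_set (S i) `&` FR_set (S j)) x by [].
by rewrite disj // eq_sym.
Qed.

Lemma ivl_set_unbounded (J : ivl R) M :
  (forall u v, J <> IOC u v) -> exists2 y, ivl_set J y & M < `|y|.
Proof.
have := ler_norm M; have := normr_ge0 M.
case: J => [u v|c|c] M0 MM notIOC; first by have := notIOC u v.
- have := ler_norm c; have := normr_ge0 c => c0 cc.
  have y0 : 0 <= `|c| + `|M| + 1 by lra.
  by exists (`|c| + `|M| + 1); rewrite /= ?(ger0_norm y0); lra.
- have := ler_norm (- c); rewrite normrN; have := normr_ge0 c => c0 cc.
  have y0 : - (`|c| + `|M| + 1) <= 0 by lra.
  by exists (- (`|c| + `|M| + 1)); rewrite /= ?(ler0_norm y0); lra.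
Qed.

Lemma bounded_support_IOC n (a : 'I_n -> R) (S : 'I_n -> seq (ivl R)) i k :
  L_wf S -> bounded_support (L_fun a S) -> a i != 0 -> (k < size (S i))%N ->
  exists u v, nth (IinfC 0) (S i) k = IOC u v.
Proof.
move=> hL [M hM] ai ks.
case: (pselect (exists u v, nth (IinfC 0) (S i) k = IOC u v)) => // notIOC.
have [|y Jy My] := ivl_set_unbounded M (J := nth (IinfC 0) (S i) k).
  by move=> u v JE; apply: notIOC; exists u, v.
have Sy : FR_set (S i) y by exists k.
by move: ai; rewrite -(L_funE a hL Sy) hM ?eqxx.
Qed.

End Daniell_calculus.

Theorem mainTheorem4 (R : realType) (K : topologicalType)
  (hK_compact : compact [set: K]) (hK_hausdorff : hausdorff_space K)
  (hK_ed : extremally_disconnected K)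
  (X : K -> \bar R) (hX : in_Cinf X)
  (Ainf Aminf : K -> R)
  (hAinf : is_sup_fam (spectral X) Ainf)
  (hAminf : is_inf_fam (spectral X) Aminf)
  (n : nat) (a : 'I_n -> R) (S : 'I_n -> seq (ivl R))
  (hf : L_wf S) (hfb : bounded_support (L_fun a S)) :
  exists H : set K, open H /\ dense H /\
    forall w, H w ->
      X w \is a fin_num /\
      daniell (spectral X) Ainf Aminf a S w = L_fun a S (fine (X w)).
Proof.
have [ofin dfin] := open_dense_fin_num hX.
have [oH dH] := open_dense_seq_cap (breakpoints S) ofin dfin
  (fun t => conj (open_off_boundary (open_Cinf_gt t hX)) (dense_off_boundary _)).
exists [set w | X w \is a fin_num /\
  forall t, t \in breakpoints S -> off_boundary [set w | (t%:E < X w)%E] w].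
split=> //; split=> // w [fw Bw]; split => //.
rewrite /daniell /L_fun; apply: eq_bigr => i _.
have [->|ai] := eqVneq (a i) 0; first by rewrite !mul0r.
congr (_ * _); rewrite /mu_FR -(sum_indic_FR_set _ (hf.1 i)) !(big_nth (IinfC 0)).
apply: eq_big_nat => k /andP[_ ks].
have [u [v JE]] := bounded_support_IOC hf hfb ai ks.
have uv : u < v by have := (hf.1 i).1 k ks; rewrite JE.
have Bu : u \in breakpoints S by apply: (mem_breakpoints ks); rewrite JE mem_head.
have Bv : v \in breakpoints S by apply: (mem_breakpoints ks); rewrite JE mem_seq2 eqxx orbT.
by rewrite JE; apply: mu_IOC_off_boundary (ltW uv) fw (Bw u Bu) (Bw v Bv).
Qed.
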